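(* Let $t(z),d(z)\in\mathbb{C}[[z]]$ with $t^2-4d$ having a simple zero at $z=0$, let $\tilde X=\operatorname{Spf}\mathbb{C}[[\tilde z]]$ be the smooth spectral curve $\xi^2-t\xi+d=0$, with coordinate $\tilde z=\sqrt{t^2-4d}$ and canonical $1$-form $\mu=\xi\,dz|_{\tilde X}$. Let $a(\tilde z,\lambda)=\sum_{i\ge0}a_i(\tilde z)\lambda^i\in\mathbb{C}((\tilde z))[[\lambda]]$ with $a(\tilde z,0)=\mu(d\tilde z)^{-1}$. Let $Y$ be the set of $r(\tilde z,\lambda)\in\mathbb{C}((\tilde z))[[\lambda]]$ such that $r(\tilde z,0)\in\mathbb{C}[[\tilde z]]^\times$ and $a'=a+\lambda r^{-1}\frac{dr}{d\tilde z}$ satisfies $a'\in\tilde z^{-1}\mathbb{C}[[\tilde z,\lambda]]$ and $\operatorname{res}_{\tilde z=0}a'=-\lambda/2$; the group $\mathbb{C}[[\tilde z,\lambda]]^\times$ acts on $Y$ by multiplication. Then $Y$ is either empty or a single $\mathbb{C}[[\tilde z,\lambda]]^\times$-orbit, and $Y$ is non-empty if and only if $a_1(\tilde z)\in\tilde z^{-1}\mathbb{C}[[\tilde z]]$ and $\operatorname{res}_{\tilde z=0}a(\tilde z,\lambda)=-\lambda/2$.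
   Context: Residues of series in $\mathbb{C}((\tilde z))[[\lambda]]$ are taken coefficientwise in $\lambda$ (coefficient of $\tilde z^{-1}$). *)

From HB Require Import structures.
From mathcomp Require Import all_boot all_order all_algebra.
From mathcomp Require Import complex reals.
From Stdlib Require Import ClassicalEpsilon.
Set Implicit Arguments. Unset Strict Implicit. Unset Printing Implicit Defensive.
Import Order.TTheory GRing.Theory Num.Theory.
Local Open Scope ring_scope.

Section FormalSeries.
Variable K : fieldType.

Definition ps := nat -> K.
Definition ps_add (f g : ps) : ps := fun n => f n + g n.
Definition ps_scale (c : K) (f : ps) : ps := fun n => c * f n.
Definition ps_mul (f g : ps) : ps := fun n => \sum_(k < n.+1) f k * g (n - k)%N.
Definition ps_one : ps := fun n => if n == 0%N then 1 else 0.
Definition ps_X : ps := fun n => if n == 1%N then 1 else 0.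
Definition ps_exp (f : ps) (k : nat) : ps := iter k (ps_mul f) ps_one.
(* composition f(Z), meaningful when Z 0 = 0 *)
Definition ps_comp (f Z : ps) : ps :=
  fun n => \sum_(k < n.+1) f k * ps_exp Z k n.
Definition ps_deriv (f : ps) : ps := fun n => n.+1%:R * f n.+1.

Definition disc (t d : ps) : ps := ps_add (ps_mul t t) (ps_scale (- 4%:R) d).

(* ---------- K((w)) : Laurent series, f n = coeff of w^n (n : int) ---------- *)
Definition laur := int -> K.
Definition laur_valid (f : laur) : Prop :=
  exists N : int, forall n : int, n < N -> f n = 0.
(* a lower bound of the support (any one; chosen classically) *)
Definition lbound (f : laur) : int :=
  epsilon (inhabits 0%R) (fun N : int => forall n : int, n < N -> f n = 0).
Definition laur_mul (f g : laur) : laur := fun n =>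
  \sum_(k < (absz (n - lbound f - lbound g)%R).+1)
     f (lbound f + k%:Z) * g (n - lbound f - k%:Z).
Definition laur_one : laur := fun n => if n == 0 then 1 else 0.
Definition laur_deriv (f : laur) : laur := fun n => (n + 1)%:~R * f (n + 1).
Definition laur_in_ps (f : laur) : Prop := forall n : int, n < 0 -> f n = 0.
Definition ps_unit1 (f : laur) : Prop :=
  laur_in_ps f /\ exists h : laur, laur_in_ps h /\ laur_mul f h = laur_one.
Definition laur_in_winv_ps (f : laur) : Prop := forall n : int, n < -1 -> f n = 0.

(* ---------- K((w))[[lam]] : a i = coefficient of lam^i ---------- *)
Definition ser := nat -> laur.
Definition ser_valid (a : ser) : Prop := forall i, laur_valid (a i).
Definition ser_add (a b : ser) : ser := fun i n => a i n + b i n.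
Definition ser_mul (a b : ser) : ser :=
  fun i n => \sum_(j < i.+1) laur_mul (a j) (b (i - j)%N) n.
Definition ser_one : ser := fun i n => if (i == 0%N) && (n == 0) then 1 else 0.
Definition ser_lam (a : ser) : ser :=
  fun i => if i is i'.+1 then a i' else (fun _ => 0).
Definition ser_deriv (a : ser) : ser := fun i => laur_deriv (a i).
(* multiplicative inverse in K((w))[[lam]] (when it exists) *)
Definition ser_inv (r : ser) : ser :=
  epsilon (inhabits (fun _ _ => 0))
          (fun s : ser => ser_valid s /\ ser_mul r s = ser_one).
Definition ser_res (a : ser) : nat -> K := fun i => a i (-1).
Definition minus_half_lam : nat -> K := fun i => if i == 1%N then - 2%:R^-1 else 0.
Definition in_ps2 (a : ser) : Prop := forall i (n : int), n < 0 -> a i n = 0.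
Definition in_winv_ps2 (a : ser) : Prop := forall i (n : int), n < -1 -> a i n = 0.
Definition ps2_unit (g : ser) : Prop :=
  in_ps2 g /\ exists h : ser, in_ps2 h /\ ser_mul g h = ser_one.

Definition a_prime (a r : ser) : ser :=
  ser_add a (ser_lam (ser_mul (ser_inv r) (ser_deriv r))).

Definition inY (a r : ser) : Prop :=
  [/\ ser_valid r, ps_unit1 (r 0%N), in_winv_ps2 (a_prime a r)
    & ser_res (a_prime a r) = minus_half_lam].

(* a(w,0) = mu (dw)^{-1} on the spectral curve xi^2 - t xi + d = 0 with
   coordinate w = 2 xi - t (so w^2 = t^2 - 4d), z = Z(w), xi = (t(Z(w)) + w)/2,
   mu = xi dz = xi Z'(w) dw. *)
Definition spectral_a0 (t d : ps) (a0 : laur) : Prop :=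
  exists Z : ps,
    [/\ Z 0%N = 0,
        ps_comp (disc t d) Z = ps_mul ps_X ps_X,
        laur_in_ps a0
      & forall n : nat,
          a0 n%:Z = ps_mul (ps_scale (2%:R^-1) (ps_add (ps_comp t Z) ps_X))
                           (ps_deriv Z) n].

End FormalSeries.
Arguments minus_half_lam {K}.
Arguments ps_X {K}.
Arguments ps_one {K}.
Arguments ser_one {K}.
Arguments laur_one {K}.

(* Identify K((w))[[lambda]] with power series in lambda over the ring of Laurent
   series in w, and write d for d/dw. If r is a unit with inverse s, then
   a' = a + lambda s dr.
   For a unit g of K[[w,lambda]], the logarithmic derivative of g r is that of r
   plus g^-1 dg, which has no pole; so Y is stable.
   The residue of s dr vanishes in every lambda-degree: in degree 0 because
   r(w,0) is a unit of K[[w]], in degree i+1 because d/dlambda (s dr) =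
   d (s dr/dlambda) is a w-derivative. Together with a'_1 = a_1 + s_0 dr_0 this
   gives the necessary conditions.
   If r, r' are in Y, then h = r/r' solves dh = h (s dr - s' dr'), and the factor
   is holomorphic because a' computed from r and from r' have the same polar part;
   solving this linear equation lambda-degree by lambda-degree shows that h is a
   unit of K[[w,lambda]].
   Conversely r = exp(c) lies in Y, where c = sum_{j>=1} lambda^j c_j and d c_j
   cancels the terms of order < -1 of a_{j+1}: then s dr = dc. *)

From HB Require Import structures.
From mathcomp Require Import all_boot all_order all_algebra.
From mathcomp Require Import complex reals.
From mathcomp Require Import zify ring.
From mathcomp Require Import boolp.
From Stdlib Require Import ClassicalEpsilon.
Import Order.TTheory GRing.Theory Num.Theory.
Local Open Scope ring_scope.

Set Implicit Arguments. Unset Strict Implicit. Unset Printing Implicit Defensive.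

Section Window.
Variable V : nmodType.
Implicit Types (F : int -> V) (A B : int).

Definition window A (m : nat) F := \sum_(k < m) F (A + k%:Z).

Lemma window_cat A m p F :
  window A (m + p) F = window A m F + window (A + m%:Z) p F.
Proof.
rewrite /window big_split_ord /=; congr (_ + _); apply: eq_bigr => i _ //=.
by rewrite PoszD addrA.
Qed.

Lemma window_eq0 A m F :
  (forall i : nat, (i < m)%N -> F (A + i%:Z) = 0) -> window A m F = 0.
Proof. by move=> F0; rewrite /window big1 // => i _; apply: F0. Qed.

Lemma window_shrink A m B p F : A <= B -> B + p%:Z <= A + m%:Z ->
  (forall x, F x != 0 -> B <= x /\ x < B + p%:Z) -> window A m F = window B p F.
Proof.
move=> leAB leBp suppF.
have F0 x : ~ (B <= x /\ x < B + p%:Z) -> F x = 0.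
  by move=> Bx; case: (eqVneq (F x) 0) => // /suppF.
pose e := absz (A + m%:Z - B - p%:Z)%R.
have -> : m = (absz (B - A)%R + (p + e))%N.
  by apply/eqP; rewrite -(eqr_nat int) /e; lia.
have defB : B = A + (absz (B - A)%R)%:Z by lia.
rewrite window_cat window_eq0 ?add0r => [|i ltim]; last by apply: F0; lia.
rewrite window_cat [X in _ + X]window_eq0 ?addr0 -?defB // => i ltie.
apply: F0; lia.
Qed.

Lemma window_supp A m A' m' F :
  (forall x, F x != 0 -> A <= x /\ x < A + m%:Z) ->
  (forall x, F x != 0 -> A' <= x /\ x < A' + m'%:Z) ->
  window A m F = window A' m' F.
Proof.
move=> suppF suppF'.
pose B := Num.max A A'; pose E := Num.min (A + m%:Z) (A' + m'%:Z).
have suppBE x : F x != 0 -> B <= x /\ x < E.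
  move=> Fx; have := suppF x Fx; have := suppF' x Fx.
  rewrite /B /E ge_max lt_min; lia.
case: (lerP B E) => [leBE|ltEB]; last first.
  by rewrite !window_eq0 // => i _; apply/eqP; apply: contraT => /suppBE; lia.
have defE : E = B + (absz (E - B)%R)%:Z by lia.
have leAB : A <= B by rewrite le_max lexx.
have leAB' : A' <= B by rewrite le_max lexx orbT.
have leE : E <= A + m%:Z by rewrite ge_min lexx.
have leE' : E <= A' + m'%:Z by rewrite ge_min lexx orbT.
by rewrite (@window_shrink A m B (absz (E - B)%R)) ?(@window_shrink A' m' B (absz (E - B)%R))
  -?defE.
Qed.

Lemma window_shift A m F c : window (A - c) m F = window A m (fun x => F (x - c)).
Proof. by apply: eq_bigr => i _; congr F; ring. Qed.

Lemma window_rev A m F n :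
  window A m F = window (n - A - m%:Z + 1) m (fun y => F (n - y)).
Proof.
rewrite /window (reindex_inj rev_ord_inj) /=; apply: eq_bigr => i _; congr F.
rewrite subnS; have := ltn_ord i; lia.
Qed.

End Window.

Section LaurentProduct.
Variable K : fieldType.
Implicit Types f g h : laur K.

Definition vanishes_below f (N : int) := forall n, n < N -> f n = 0.

Lemma lbound_vanishes f : laur_valid f -> vanishes_below f (lbound f).
Proof. by move=> vf; apply: epsilon_spec. Qed.

Lemma vanishes_below_le f N N' : vanishes_below f N -> N' <= N -> vanishes_below f N'.
Proof. by move=> fN leN n ltn; apply: fN; apply: lt_le_trans leN. Qed.

Lemma vanishes_below_valid f N : vanishes_below f N -> laur_valid f.
Proof. by exists N. Qed.

Lemma common_lower_bound f g h : laur_valid f -> laur_valid g -> laur_valid h ->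
  exists N, [/\ N <= 0, vanishes_below f N, vanishes_below g N & vanishes_below h N].
Proof.
move=> vf vg vh; pose N := Num.min (lbound f) (Num.min (lbound g) (Num.min (lbound h) 0)).
exists N; split; first by rewrite !ge_min lexx !orbT.
- by apply: vanishes_below_le (lbound_vanishes vf) _; rewrite ge_min lexx.
- by apply: vanishes_below_le (lbound_vanishes vg) _; rewrite !ge_min lexx orbT.
- by apply: vanishes_below_le (lbound_vanishes vh) _; rewrite !ge_min lexx !orbT.
Qed.

Lemma conv_term_supp f g N1 N2 n x : vanishes_below f N1 -> vanishes_below g N2 ->
  f x * g (n - x) != 0 -> N1 <= x /\ x < n - N2 + 1.
Proof.
move=> fN1 gN2 fg_x; split.
  by rewrite leNgt; apply/negP => /fN1 fx0; rewrite fx0 mul0r eqxx in fg_x.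
by rewrite ltNge; apply/negP => le_x; rewrite gN2 ?mulr0 ?eqxx in fg_x; lia.
Qed.

Lemma laur_mulE f g N1 N2 n A m : vanishes_below f N1 -> vanishes_below g N2 ->
  A <= N1 -> n - N2 < A + m%:Z ->
  laur_mul f g n = window A m (fun x => f x * g (n - x)).
Proof.
move=> fN1 gN2 leA ltm.
have vf := lbound_vanishes (vanishes_below_valid fN1).
have vg := lbound_vanishes (vanishes_below_valid gN2).
transitivity (window (lbound f) (absz (n - lbound f - lbound g)%R).+1
                (fun x => f x * g (n - x))).
  by apply: eq_bigr => i _; rewrite opprD addrA.
apply: window_supp => x fg_x.
  by have := conv_term_supp vf vg fg_x; lia.
by have := conv_term_supp fN1 gN2 fg_x; lia.
Qed.

Lemma vanishes_below_mul f g N1 N2 : vanishes_below f N1 -> vanishes_below g N2 ->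
  vanishes_below (laur_mul f g) (N1 + N2).
Proof.
move=> fN1 gN2 n ltn; rewrite (laur_mulE (m := 0) fN1 gN2 (lexx N1)); last lia.
exact: big_ord0.
Qed.

Lemma laur_mulC f g N : vanishes_below f N -> vanishes_below g N ->
  laur_mul f g = laur_mul g f.
Proof.
move=> fN gN; apply: funext => n; pose m := (absz (n - N - N)%R).+1.
rewrite (laur_mulE (m := m) fN gN (lexx N)); last lia.
rewrite (laur_mulE (A := n - N - m%:Z + 1) (m := m) gN fN); try lia.
rewrite (window_rev _ _ _ n); apply: eq_bigr => i _.
by rewrite mulrC; congr (g _ * _); ring.
Qed.

Lemma laur_mulDl f g h N : vanishes_below f N -> vanishes_below g N ->
  vanishes_below h N ->
  laur_mul (fun n => f n + g n) h = fun n => laur_mul f h n + laur_mul g h n.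
Proof.
move=> fN gN hN; apply: funext => n.
have fgN : vanishes_below (fun n => f n + g n) N by move=> x ltx; rewrite fN ?gN ?addr0.
pose m := (absz (n - N - N)%R).+1; have ltm : n - N < N + m%:Z by lia.
rewrite !(laur_mulE (N1 := N) (A := N) (m := m) _ hN) ?lexx // /window -big_split.
by apply: eq_bigr => i _; rewrite mulrDl.
Qed.

Lemma laur_mulA f g h N : N <= 0 -> vanishes_below f N -> vanishes_below g N ->
  vanishes_below h N -> laur_mul (laur_mul f g) h = laur_mul f (laur_mul g h).
Proof.
move=> N0 fN gN hN; apply: funext => n.
pose A := N + N; pose M := (absz (n - N - N - N - N)%R).+1.
rewrite (laur_mulE (A := A) (m := M) (vanishes_below_mul fN gN) hN); [|lia..].
rewrite (laur_mulE (A := A) (m := M) fN (vanishes_below_mul gN hN)); [|lia..].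
have expandL x : laur_mul f g x * h (n - x) =
    window A M (fun y => f y * g (x - y) * h (n - x)).
  have [->|hx] := eqVneq (h (n - x)) 0.
    by rewrite mulr0 window_eq0 // => i _; rewrite mulr0.
  have ltx : x - N < n - N - N + 1.
    by rewrite ltNge; apply/negP => lex; rewrite hN ?eqxx in hx; lia.
  by rewrite (laur_mulE (A := A) (m := M) fN gN) ?/window ?mulr_suml //; lia.
have expandR y : f y * laur_mul g h (n - y) =
    window A M (fun x => f y * g (x - y) * h (n - x)).
  have [->|fy] := eqVneq (f y) 0.
    by rewrite mul0r window_eq0 // => i _; rewrite !mul0r.
  have leNy : N <= y by rewrite leNgt; apply/negP => /fN fy0; rewrite fy0 eqxx in fy.
  rewrite (laur_mulE (A := A - y) (m := M) gN hN); [|lia..].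
  rewrite window_shift /window mulr_sumr; apply: eq_bigr => i _; rewrite mulrA.
  by congr (_ * _ * h _); ring.
rewrite /window; under eq_bigr do rewrite expandL; under [RHS]eq_bigr do rewrite expandR.
exact: exchange_big.
Qed.

Definition laur_cst (k : K) : laur K := fun n => if n == 0 then k else 0.

Lemma vanishes_below_cst k : vanishes_below (laur_cst k) 0.
Proof. by move=> n ltn; rewrite /laur_cst ifF //; apply/negbTE; lia. Qed.

Lemma laur_mul_cst k f N : vanishes_below f N -> laur_mul (laur_cst k) f = fun n => k * f n.
Proof.
move=> fN; apply: funext => n; pose A := Num.min N 0.
have leA0 : A <= 0 by rewrite ge_min lexx orbT.
have leAN : A <= N by rewrite ge_min lexx.
pose m := (absz (n - N - A)%R + absz A).+1.
have supp0 x : laur_cst k x * f (n - x) != 0 -> x = 0.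
  by rewrite /laur_cst; have [|_] := eqVneq x 0; rewrite ?mul0r ?eqxx.
rewrite (laur_mulE (m := m) (vanishes_below_cst k) fN leA0); last lia.
rewrite (window_supp (A' := 0) (m' := 1)).
- by rewrite /window big_ord1 /laur_cst add0r eqxx subr0.
- by move=> x /supp0 ->; lia.
- by move=> x /supp0 ->; lia.
Qed.

Lemma vanishes_below_deriv f N : vanishes_below f N -> vanishes_below (laur_deriv f) (N - 1).
Proof. by move=> fN n ltn; rewrite /laur_deriv fN ?mulr0 //; lia. Qed.

Lemma laur_deriv_mul f g N : vanishes_below f N -> vanishes_below g N ->
  laur_deriv (laur_mul f g) =
  fun n => laur_mul (laur_deriv f) g n + laur_mul f (laur_deriv g) n.
Proof.
move=> fN gN; apply: funext => n; pose m := (absz (n - N - N)%R).+3.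
have f'N := vanishes_below_deriv fN; have g'N := vanishes_below_deriv gN.
have gN1 : vanishes_below g (N - 1) by apply: vanishes_below_le gN _; lia.
rewrite /laur_deriv (laur_mulE (m := m) fN gN (lexx N)); last lia.
rewrite (laur_mulE (A := N - 1) (m := m) f'N gN1); [|lia..].
rewrite (laur_mulE (m := m) fN g'N (lexx N)); last lia.
rewrite window_shift /window mulr_sumr -big_split; apply: eq_bigr => i _ /=.
rewrite /laur_deriv (_ : N + i%:Z - 1 + 1 = N + i%:Z); last ring.
rewrite (_ : n - (N + i%:Z - 1) = n + 1 - (N + i%:Z)); last ring.
rewrite (_ : n - (N + i%:Z) + 1 = n + 1 - (N + i%:Z)); last ring.
rewrite (_ : n + 1 = (N + i%:Z) + (n + 1 - (N + i%:Z))) 1?intrD; last ring.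
ring.
Qed.

End LaurentProduct.

Section LaurentRing.
Variable K : fieldType.

Definition laurent := {f : laur K | laur_valid f}.
HB.instance Definition _ := gen_eqMixin laurent.
HB.instance Definition _ := gen_choiceMixin laurent.

Definition lval (x : laurent) : laur K := sval x.

Lemma lval_inj : injective lval.
Proof. by case=> [f vf] [g vg] /= fg; subst g; congr exist; exact: Prop_irrelevance. Qed.

Lemma lval_valid (x : laurent) : laur_valid (lval x).
Proof. exact: svalP. Qed.

Lemma laur_validD (f g : laur K) : laur_valid f -> laur_valid g ->
  laur_valid (fun n => f n + g n).
Proof.
move=> vf vg; have [N [_ fN gN _]] := common_lower_bound vf vg vg.
by exists N => n ltn; rewrite fN ?gN ?addr0.
Qed.

Lemma laur_validN (f : laur K) : laur_valid f -> laur_valid (fun n => - f n).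
Proof. by case=> N fN; exists N => n ltn; rewrite fN ?oppr0. Qed.

Lemma laur_validM (f g : laur K) : laur_valid f -> laur_valid g ->
  laur_valid (laur_mul f g).
Proof.
move=> vf vg.
exact: vanishes_below_valid (vanishes_below_mul (lbound_vanishes vf) (lbound_vanishes vg)).
Qed.

Lemma laur_valid0 : laur_valid (fun _ : int => 0 : K).
Proof. by exists 0. Qed.

Lemma laur_valid_cst (k : K) : laur_valid (laur_cst k).
Proof. exact: vanishes_below_valid (vanishes_below_cst k). Qed.

Lemma laur_valid_deriv (f : laur K) : laur_valid f -> laur_valid (laur_deriv f).
Proof. by move=> vf; exact: vanishes_below_valid (vanishes_below_deriv (lbound_vanishes vf)). Qed.

Definition laurent_add (x y : laurent) : laurent :=
  exist _ _ (laur_validD (lval_valid x) (lval_valid y)).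
Definition laurent_opp (x : laurent) : laurent := exist _ _ (laur_validN (lval_valid x)).
Definition laurent_zero : laurent := exist _ _ laur_valid0.
Definition laurent_mul (x y : laurent) : laurent :=
  exist _ _ (laur_validM (lval_valid x) (lval_valid y)).
Definition laurent_cst (k : K) : laurent := exist _ _ (laur_valid_cst k).
Definition laurent_deriv (x : laurent) : laurent := exist _ _ (laur_valid_deriv (lval_valid x)).

Lemma laurent_addA : associative laurent_add.
Proof. by move=> x y z; apply: lval_inj; apply: funext => n /=; rewrite addrA. Qed.
Lemma laurent_addC : commutative laurent_add.
Proof. by move=> x y; apply: lval_inj; apply: funext => n /=; rewrite addrC. Qed.
Lemma laurent_add0 : left_id laurent_zero laurent_add.
Proof. by move=> x; apply: lval_inj; apply: funext => n /=; rewrite add0r. Qed.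
Lemma laurent_addN : left_inverse laurent_zero laurent_opp laurent_add.
Proof. by move=> x; apply: lval_inj; apply: funext => n /=; rewrite addNr. Qed.

HB.instance Definition _ :=
  GRing.isZmodule.Build laurent laurent_addA laurent_addC laurent_add0 laurent_addN.

Lemma laurent_mulA : associative laurent_mul.
Proof.
move=> x y z; apply: lval_inj => /=; symmetry.
have [N [N0 xN yN zN]] := common_lower_bound (lval_valid x) (lval_valid y) (lval_valid z).
exact: laur_mulA N0 xN yN zN.
Qed.
Lemma laurent_mulC : commutative laurent_mul.
Proof.
move=> x y; apply: lval_inj => /=.
have [N [_ xN yN _]] := common_lower_bound (lval_valid x) (lval_valid y) (lval_valid y).
exact: laur_mulC xN yN.
Qed.
Lemma laurent_mul1 : left_id (laurent_cst 1) laurent_mul.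
Proof.
move=> x; apply: lval_inj => /=; rewrite (laur_mul_cst _ (lbound_vanishes (lval_valid x))).
by apply: funext => n; rewrite mul1r.
Qed.
Lemma laurent_mulDl : left_distributive laurent_mul laurent_add.
Proof.
move=> x y z; apply: lval_inj => /=.
have [N [_ xN yN zN]] := common_lower_bound (lval_valid x) (lval_valid y) (lval_valid z).
exact: laur_mulDl xN yN zN.
Qed.
Lemma laurent_one_neq0 : laurent_cst 1 != laurent_zero.
Proof.
apply/eqP => /(congr1 (fun x => lval x 0)); rewrite /= /laur_cst eqxx.
by move/eqP; rewrite oner_eq0.
Qed.

HB.instance Definition _ := GRing.Zmodule_isComNzRing.Build laurent
  laurent_mulA laurent_mulC laurent_mul1 laurent_mulDl laurent_one_neq0.

Lemma lvalD (x y : laurent) n : lval (x + y) n = lval x n + lval y n. Proof. by []. Qed.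
Lemma lvalB (x y : laurent) n : lval (x - y) n = lval x n - lval y n. Proof. by []. Qed.
Lemma lval0 n : lval 0 n = 0. Proof. by []. Qed.
Lemma lvalM (x y : laurent) : lval (x * y) = laur_mul (lval x) (lval y). Proof. by []. Qed.
Lemma lval1 : lval 1 = laur_one. Proof. by []. Qed.

Lemma lval_sum I (r : seq I) (P : pred I) (F : I -> laurent) n :
  lval (\sum_(i <- r | P i) F i) n = \sum_(i <- r | P i) lval (F i) n.
Proof. by apply: (big_morph (fun x => lval x n) (id1 := 0) (op1 := +%R)). Qed.

Lemma lvalMn (x : laurent) k n : lval (x *+ k) n = lval x n *+ k.
Proof. by elim: k => [|k IH]; rewrite ?lval0 // !mulrS lvalD IH. Qed.

Lemma lval_cstM (k : K) (x : laurent) n : lval (laurent_cst k * x) n = k * lval x n.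
Proof. by rewrite lvalM /= (laur_mul_cst _ (lbound_vanishes (lval_valid x))). Qed.

Lemma laurent_deriv_is_zmod_morphism : zmod_morphism laurent_deriv.
Proof. by move=> x y; apply: lval_inj; apply: funext => n /=; rewrite /laur_deriv /= mulrBr. Qed.

HB.instance Definition _ := GRing.isZmodMorphism.Build laurent laurent
  laurent_deriv laurent_deriv_is_zmod_morphism.

Lemma laurent_derivM (x y : laurent) :
  laurent_deriv (x * y) = laurent_deriv x * y + x * laurent_deriv y.
Proof.
apply: lval_inj => /=.
have [N [_ xN yN _]] := common_lower_bound (lval_valid x) (lval_valid y) (lval_valid y).
exact: laur_deriv_mul xN yN.
Qed.

End LaurentRing.

Section StrongRecursion.
Variables (T : Type) (dflt : T) (step : nat -> (nat -> T) -> T).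
Hypothesis step_ext :
  forall i f g, (forall j, (j < i)%N -> f j = g j) -> step i f = step i g.

Let approx n : nat -> T := iter n (fun f i => step i f) (fun _ => dflt).

Definition strong_rec i := approx i.+1 i.

Lemma approx_stable n m i : (i < n)%N -> (i < m)%N -> approx n i = approx m i.
Proof.
elim: n m i => [//|n IH] [//|m] i ltin ltim /=.
by apply: step_ext => j ltji; apply: IH; apply: leq_trans ltji _.
Qed.

Lemma strong_recE i : strong_rec i = step i strong_rec.
Proof. by apply: step_ext => j ltji; apply: approx_stable. Qed.

End StrongRecursion.

Section FormalPowerSeries.
Variable R : comNzRingType.

Record fps := Fps { fcoef : nat -> R }.
HB.instance Definition _ := gen_eqMixin fps.
HB.instance Definition _ := gen_choiceMixin fps.

Implicit Types p q : fps.

Lemma fps_ext p q : (forall i, fcoef p i = fcoef q i) -> p = q.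
Proof. by case: p => f; case: q => g /= fg; congr Fps; apply: funext. Qed.

Definition fps_add p q := Fps (fun i => fcoef p i + fcoef q i).
Definition fps_opp p := Fps (fun i => - fcoef p i).
Definition fps_zero := Fps (fun _ => 0).
Definition fps_mul p q := Fps (fun i => \sum_(j < i.+1) fcoef p j * fcoef q (i - j)).
Definition fps_one := Fps (fun i => (i == 0)%:R).

Lemma fps_addA : associative fps_add.
Proof. by move=> p q r; apply: fps_ext => i /=; rewrite addrA. Qed.
Lemma fps_addC : commutative fps_add.
Proof. by move=> p q; apply: fps_ext => i /=; rewrite addrC. Qed.
Lemma fps_add0 : left_id fps_zero fps_add.
Proof. by move=> p; apply: fps_ext => i /=; rewrite add0r. Qed.
Lemma fps_addN : left_inverse fps_zero fps_opp fps_add.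
Proof. by move=> p; apply: fps_ext => i /=; rewrite addNr. Qed.

HB.instance Definition _ := GRing.isZmodule.Build fps fps_addA fps_addC fps_add0 fps_addN.

Definition fps_trunc p i : {poly R} := \poly_(j < i.+1) fcoef p j.

Lemma coef_fps_trunc p i j : (j <= i)%N -> (fps_trunc p i)`_j = fcoef p j.
Proof. by move=> leji; rewrite coef_poly ltnS leji. Qed.

Lemma coefM_agree (p p' q q' : {poly R}) i :
  (forall j, (j <= i)%N -> p`_j = p'`_j) -> (forall j, (j <= i)%N -> q`_j = q'`_j) ->
  (p * q)`_i = (p' * q')`_i.
Proof.
move=> pp' qq'; rewrite !coefM; apply: eq_bigr => j _.
by rewrite pp' -1?ltnS // qq' // leq_subr.
Qed.

Lemma fcoef_mul_trunc p q i k : (k <= i)%N ->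
  fcoef (fps_mul p q) k = (fps_trunc p i * fps_trunc q i)`_k.
Proof.
move=> leki; rewrite coefM /=; apply: eq_bigr => j _.
have lejk : (j <= k)%N by rewrite -ltnS.
by rewrite !coef_fps_trunc // ?(leq_trans lejk) // (leq_trans (leq_subr _ _)).
Qed.

Lemma fps_mulA : associative fps_mul.
Proof.
move=> p q r; apply: fps_ext => i.
rewrite (fcoef_mul_trunc _ _ (leqnn i)) (fcoef_mul_trunc (fps_mul p q) r (leqnn i)).
transitivity ((fps_trunc p i * (fps_trunc q i * fps_trunc r i))`_i).
  by apply: coefM_agree => j leji //; rewrite coef_fps_trunc // (fcoef_mul_trunc _ _ leji).
rewrite mulrA; apply: coefM_agree => j leji //.
by rewrite coef_fps_trunc // (fcoef_mul_trunc _ _ leji).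
Qed.
Lemma fps_mulC : commutative fps_mul.
Proof.
by move=> p q; apply: fps_ext => i; rewrite !(fcoef_mul_trunc _ _ (leqnn i)) mulrC.
Qed.
Lemma fps_mul1 : left_id fps_one fps_mul.
Proof.
move=> p; apply: fps_ext => i; rewrite (fcoef_mul_trunc _ _ (leqnn i)).
transitivity ((1 * fps_trunc p i)`_i); last by rewrite mul1r coef_fps_trunc.
by apply: coefM_agree => j leji //; rewrite coef_fps_trunc // coef1.
Qed.
Lemma fps_mulDl : left_distributive fps_mul fps_add.
Proof.
move=> p q r; apply: fps_ext => i /=; rewrite -big_split /=.
by apply: eq_bigr => j _; rewrite mulrDl.
Qed.
Lemma fps_one_neq0 : fps_one != fps_zero.
Proof. by apply/eqP => /(congr1 (fcoef^~ 0)) /= /eqP; rewrite oner_eq0. Qed.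

HB.instance Definition _ := GRing.Zmodule_isComNzRing.Build fps
  fps_mulA fps_mulC fps_mul1 fps_mulDl fps_one_neq0.

Lemma fcoefD p q i : fcoef (p + q) i = fcoef p i + fcoef q i. Proof. by []. Qed.
Lemma fcoefB p q i : fcoef (p - q) i = fcoef p i - fcoef q i. Proof. by []. Qed.
Lemma fcoefM p q i : fcoef (p * q) i = \sum_(j < i.+1) fcoef p j * fcoef q (i - j).
Proof. by []. Qed.
Lemma fcoefM0 p q : fcoef (p * q) 0 = fcoef p 0 * fcoef q 0.
Proof. by rewrite fcoefM big_ord1. Qed.

Definition fps_deriv p := Fps (fun i => fcoef p i.+1 *+ i.+1).

Lemma fps_derivD p q : fps_deriv (p + q) = fps_deriv p + fps_deriv q.
Proof. by apply: fps_ext => i /=; rewrite mulrnDl. Qed.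
Lemma fps_derivN p : fps_deriv (- p) = - fps_deriv p.
Proof. by apply: fps_ext => i /=; rewrite mulNrn. Qed.
Lemma fps_deriv1 : fps_deriv 1 = 0.
Proof. by apply: fps_ext => i /=; rewrite mul0rn. Qed.

Lemma fps_derivM p q : fps_deriv (p * q) = fps_deriv p * q + p * fps_deriv q.
Proof.
apply: fps_ext => i; rewrite fcoefD.
change (fcoef (p * q) i.+1 *+ i.+1 = fcoef (fps_deriv p * q) i + fcoef (p * fps_deriv q) i).
rewrite (fcoef_mul_trunc _ _ (leqnn i.+1)) -coef_deriv derivM coefD.
rewrite (fcoef_mul_trunc _ _ (leqnn i)) (fcoef_mul_trunc p _ (leqnn i)).
congr (_ + _); apply: coefM_agree => j leji;
  by rewrite ?coef_deriv !coef_fps_trunc // ltnW.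
Qed.

Definition fps_map (f : R -> R) p := Fps (f \o fcoef p).

Lemma fcoef_map f p i : fcoef (fps_map f p) i = f (fcoef p i). Proof. by []. Qed.

Section Derivation.
Variable d : {additive R -> R}.
Hypothesis derivM : forall x y, d (x * y) = d x * y + x * d y.

Lemma deriv1 : d 1 = 0.
Proof.
have d1E := derivM 1 1; rewrite !mulr1 mul1r in d1E.
by apply: (addrI (d 1)); rewrite addr0 -d1E.
Qed.

Lemma fps_map_derivM p q : fps_map d (p * q) = fps_map d p * q + p * fps_map d q.
Proof.
apply: fps_ext => i; rewrite fcoefD /= raddf_sum -big_split /=.
by apply: eq_bigr => j _; rewrite derivM.
Qed.

Lemma fps_map_deriv1 : fps_map d 1 = 0.
Proof. by apply: fps_ext => -[|i] /=; rewrite ?deriv1 ?raddf0. Qed.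

Lemma fps_map_derivC p : fps_map d (fps_deriv p) = fps_deriv (fps_map d p).
Proof. by apply: fps_ext => i /=; rewrite raddfMn. Qed.

Lemma fps_map_deriv_inv p q : p * q = 1 -> fps_map d q = - (q * q * fps_map d p).
Proof.
move=> pq; have dpq : p * fps_map d q = - (fps_map d p * q).
  by apply/eqP; rewrite -addr_eq0 addrC -fps_map_derivM pq fps_map_deriv1.
transitivity (q * (p * fps_map d q)); first by rewrite mulrA (mulrC q) pq mul1r.
by rewrite dpq; ring.
Qed.

Lemma fps_map_deriv_ratio p q p' q' : p * q = 1 -> p' * q' = 1 ->
  fps_map d (p * q') = p * q' * (q * fps_map d p - q' * fps_map d p').
Proof.
move=> pq p'q'; rewrite fps_map_derivM (fps_map_deriv_inv p'q').
transitivity (p * q * (fps_map d p * q') - p * (q' * q' * fps_map d p')).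
  by rewrite pq mul1r; ring.
by ring.
Qed.

(* Both sides are the mixed second derivative of log p. *)
Lemma fps_deriv_logder p q : p * q = 1 ->
  fps_deriv (q * fps_map d p) = fps_map d (q * fps_deriv p).
Proof.
move=> pq.
have dlq : p * fps_deriv q = - (fps_deriv p * q).
  by apply/eqP; rewrite -addr_eq0 addrC -fps_derivM pq fps_deriv1.
have ddq : p * fps_map d q = - (fps_map d p * q).
  by apply/eqP; rewrite -addr_eq0 addrC -fps_map_derivM pq fps_map_deriv1.
rewrite fps_derivM fps_map_derivM fps_map_derivC; congr (_ + _).
transitivity (p * q * (fps_deriv q * fps_map d p)); first by rewrite pq mul1r.
transitivity (p * q * (fps_map d q * fps_deriv p)); last by rewrite pq mul1r.
transitivity (q * (p * fps_deriv q) * fps_map d p); first by ring.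
rewrite dlq; transitivity (q * (p * fps_map d q) * fps_deriv p); last by ring.
by rewrite ddq; ring.
Qed.

End Derivation.

Lemma fps_rinv_exists p u : fcoef p 0 * u = 1 -> exists q, p * q = 1.
Proof.
move=> p0u.
pose step i (f : nat -> R) :=
  if i is 0 then u else - u * \sum_(j < i) f j * fcoef p (i - j).
have step_ext i f g : (forall j, (j < i)%N -> f j = g j) -> step i f = step i g.
  by case: i => // i fg; congr (_ * _); apply: eq_bigr => j _; rewrite fg.
pose q := Fps (strong_rec u step).
have qE i : fcoef q i = step i (fcoef q) by rewrite /= strong_recE.
clearbody q; exists q; rewrite mulrC; apply: fps_ext => i.
rewrite fcoefM big_ord_recr /= subnn qE.
case: i => [|i] /=; first by rewrite big_ord0 add0r mulrC.
set S := \sum_(j < i.+1) _.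
have -> : - u * S * fcoef p 0 = - S * (fcoef p 0 * u) by ring.
by rewrite p0u mulr1 addrN.
Qed.

Section Exponential.
Variable inv_nat : nat -> R.
Hypothesis inv_natP : forall i, inv_nat i * i.+1%:R = 1.

Lemma fps_deriv_eq_mul0 z q : fps_deriv z = q * z -> fcoef z 0 = 0 -> z = 0.
Proof.
move=> z'E z0; suff zi0 i : forall j, (j <= i)%N -> fcoef z j = 0.
  by apply: fps_ext => i; rewrite (zi0 i i).
elim: i => [|i IH] j; first by rewrite leqn0 => /eqP ->.
rewrite leq_eqVlt => /orP[/eqP ->|]; last exact: IH.
have zi : fcoef z i.+1 *+ i.+1 = 0.
  rewrite -[LHS]/(fcoef (fps_deriv z) i) z'E fcoefM big1 // => k _.
  by rewrite IH ?mulr0 ?leq_subr.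
by rewrite -[fcoef z _]mul1r -(inv_natP i) -mulrA mulr_natl zi mulr0.
Qed.

Variable c : fps.

Definition fps_exp : fps :=
  Fps (strong_rec 0 (fun i f => if i is i'.+1
    then inv_nat i' * \sum_(j < i) fcoef (fps_deriv c) j * f (i' - j)%N else 1)).

Lemma fcoef_exp i : fcoef fps_exp i = if i is i'.+1
  then inv_nat i' * \sum_(j < i) fcoef (fps_deriv c) j * fcoef fps_exp (i' - j)%N else 1.
Proof.
rewrite /= strong_recE // => -[|i'] f g fg //=; congr (_ * _).
by apply: eq_bigr => j _; rewrite fg // ltnS leq_subr.
Qed.

Lemma fcoef_exp0 : fcoef fps_exp 0 = 1.
Proof. by rewrite fcoef_exp. Qed.

Lemma fps_deriv_exp : fps_deriv fps_exp = fps_deriv c * fps_exp.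
Proof.
apply: fps_ext => i; rewrite -[LHS]/(fcoef fps_exp i.+1 *+ i.+1) fcoef_exp.
by rewrite -mulr_natr mulrAC inv_natP mul1r.
Qed.

Lemma fps_map_exp (d : {additive R -> R}) :
  (forall x y, d (x * y) = d x * y + x * d y) -> fcoef c 0 = 0 ->
  fps_map d fps_exp = fps_exp * fps_map d c.
Proof.
move=> derivM c0; apply/eqP; rewrite -subr_eq0; apply/eqP.
apply: (@fps_deriv_eq_mul0 _ (fps_deriv c)).
  rewrite fps_derivD fps_derivN fps_derivM -!fps_map_derivC fps_deriv_exp.
  by rewrite fps_map_derivM //; ring.
by rewrite fcoefB fcoefM0 !fcoef_map fcoef_exp0 mul1r c0 raddf0 deriv1 // subrr.
Qed.

End Exponential.

End FormalPowerSeries.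

Section SeriesAsPowerSeries.
Variable K : fieldType.
Implicit Types (A B : fps (laurent K)) (r : ser K).

Definition ser_of_fps A : ser K := fun i => lval (fcoef A i).

Definition laurent_of (f : laur K) : laurent K :=
  if pselect (laur_valid f) is left vf then exist _ f vf else 0.

Definition fps_of_ser r := Fps (fun i => laurent_of (r i)).

Lemma laurent_ofK f : laur_valid f -> lval (laurent_of f) = f.
Proof. by rewrite /laurent_of; case: pselect. Qed.

Lemma lvalK : cancel (@lval K) laurent_of.
Proof. by move=> x; apply: lval_inj; apply: laurent_ofK; apply: lval_valid. Qed.

Lemma fps_of_serK r : ser_valid r -> ser_of_fps (fps_of_ser r) = r.
Proof. by move=> vr; apply: funext => i; rewrite /ser_of_fps /= laurent_ofK. Qed.

Lemma lval_fps_of_ser r i : ser_valid r -> lval (fcoef (fps_of_ser r) i) = r i.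
Proof. by move=> vr; rewrite /= laurent_ofK. Qed.

Lemma ser_of_fpsK : cancel ser_of_fps fps_of_ser.
Proof. by move=> A; apply: fps_ext => i; rewrite /= lvalK. Qed.

Lemma ser_of_fps_valid A : ser_valid (ser_of_fps A).
Proof. by move=> i; apply: lval_valid. Qed.

Lemma ser_mulE A B : ser_mul (ser_of_fps A) (ser_of_fps B) = ser_of_fps (A * B).
Proof.
apply: funext => i; apply: funext => n; rewrite /ser_of_fps fcoefM lval_sum.
by apply: eq_bigr => j _; rewrite lvalM.
Qed.

Lemma ser_oneE : ser_one = ser_of_fps 1.
Proof. by apply: funext => -[|i]; apply: funext => n. Qed.

Definition fps_wderiv := fps_map (@laurent_deriv K).

Lemma ser_derivE A : ser_deriv (ser_of_fps A) = ser_of_fps (fps_wderiv A).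
Proof. by []. Qed.

Lemma fps_wderivM A B : fps_wderiv (A * B) = fps_wderiv A * B + A * fps_wderiv B.
Proof. exact/fps_map_derivM/laurent_derivM. Qed.

Definition fps_lam A := Fps (fun i => if i is i'.+1 then fcoef A i' else 0).

Lemma fcoef_lam0 A : fcoef (fps_lam A) 0 = 0.
Proof. by []. Qed.

Lemma fcoef_lamS A i : fcoef (fps_lam A) i.+1 = fcoef A i.
Proof. by []. Qed.

Lemma ser_lamE A : ser_lam (ser_of_fps A) = ser_of_fps (fps_lam A).
Proof. by apply: funext => -[|i]. Qed.

Lemma fps_lamD A B : fps_lam (A + B) = fps_lam A + fps_lam B.
Proof. by apply: fps_ext => -[|i] //=; rewrite addr0. Qed.

Lemma fps_lamN A : fps_lam (- A) = - fps_lam A.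
Proof. by apply: fps_ext => -[|i] //=; rewrite oppr0. Qed.

Lemma ser_inv_fps r S : ser_valid r -> fps_of_ser r * S = 1 -> ser_inv r = ser_of_fps S.
Proof.
move=> vr rS.
have inv_ex : exists s, ser_valid s /\ ser_mul r s = ser_one.
  exists (ser_of_fps S); split; first exact: ser_of_fps_valid.
  by rewrite -{1}(fps_of_serK vr) ser_mulE rS ser_oneE.
have [vs rs] := epsilon_spec (inhabits (fun _ _ => 0)) _ inv_ex.
rewrite -/(ser_inv r) in vs rs; rewrite -(fps_of_serK vs); congr ser_of_fps.
rewrite -[LHS]mul1r -rS mulrAC -[fps_of_ser r * _]ser_of_fpsK -ser_mulE.
by rewrite !fps_of_serK // rs ser_oneE ser_of_fpsK mul1r.
Qed.

(* [S] stands for the inverse of [R]. *)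
Definition a_prime_fps (a : ser K) R S := fps_of_ser a + fps_lam (S * fps_wderiv R).

Lemma a_primeE (a r : ser K) S : ser_valid a -> ser_valid r -> fps_of_ser r * S = 1 ->
  a_prime a r = ser_of_fps (a_prime_fps a (fps_of_ser r) S).
Proof.
move=> va vr rS; rewrite /a_prime (ser_inv_fps vr rS) -{1}(fps_of_serK vr).
by rewrite ser_derivE ser_mulE ser_lamE -{1}(fps_of_serK va).
Qed.

End SeriesAsPowerSeries.

Section Holomorphy.
Variable K : fieldType.
Implicit Types (f g : laur K) (A B : fps (laurent K)).

Lemma laur_in_psM f g : laur_in_ps f -> laur_in_ps g -> laur_in_ps (laur_mul f g).
Proof. by move=> f0 g0; have := vanishes_below_mul f0 g0; rewrite addr0. Qed.

Lemma laur_in_ps_deriv f : laur_in_ps f -> laur_in_ps (laur_deriv f).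
Proof.
move=> f0 n ltn; rewrite /laur_deriv.
have [->|ne] := eqVneq n (-1); first by rewrite addNr mul0r.
by rewrite f0 ?mulr0 //; lia.
Qed.

Lemma in_ps2M A B :
  in_ps2 (ser_of_fps A) -> in_ps2 (ser_of_fps B) -> in_ps2 (ser_of_fps (A * B)).
Proof.
move=> A0 B0 i n ltn; rewrite /ser_of_fps fcoefM lval_sum big1 // => j _.
by rewrite lvalM; apply: (laur_in_psM (A0 j) (B0 _) ltn).
Qed.

Lemma in_ps2_valid (r : ser K) : in_ps2 r -> ser_valid r.
Proof. by move=> r0 i; exists 0; apply: r0. Qed.

Lemma in_ps2_wderiv A : in_ps2 (ser_of_fps A) -> in_ps2 (ser_of_fps (fps_wderiv A)).
Proof. by move=> A0 i; apply: laur_in_ps_deriv (A0 i). Qed.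

Lemma in_ps2_lam A : in_ps2 (ser_of_fps A) -> in_ps2 (ser_of_fps (fps_lam A)).
Proof. by move=> A0 [|i] n ltn //=; apply: A0. Qed.

Lemma in_winv_ps2D A B :
  in_winv_ps2 (ser_of_fps A) -> in_ps2 (ser_of_fps B) -> in_winv_ps2 (ser_of_fps (A + B)).
Proof.
move=> A0 B0 i n ltn.
have A0n : lval (fcoef A i) n = 0 by apply: A0; lia.
have B0n : lval (fcoef B i) n = 0 by apply: B0; lia.
by rewrite /ser_of_fps lvalD A0n B0n addr0.
Qed.

Lemma ser_resD A B i :
  ser_res (ser_of_fps (A + B)) i = ser_res (ser_of_fps A) i + ser_res (ser_of_fps B) i.
Proof. by []. Qed.

Lemma ser_res_in_ps2 A i : in_ps2 (ser_of_fps A) -> ser_res (ser_of_fps A) i = 0.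
Proof. by move=> A0; apply: A0. Qed.

Lemma ser_res_lam A i : ser_res (ser_of_fps (fps_lam A)) i =
  if i is i'.+1 then ser_res (ser_of_fps A) i' else 0.
Proof. by case: i. Qed.

Lemma ser_res_wderiv A i : ser_res (ser_of_fps (fps_wderiv A)) i = 0.
Proof.
by rewrite -[LHS]/(laur_deriv (lval (fcoef A i)) (-1)) /laur_deriv addNr mul0r.
Qed.

End Holomorphy.

Section LogarithmicDerivative.
Variable K : numFieldType.
Implicit Types (f g y : laur K) (A B G H R S : fps (laurent K)).

Lemma ser_res_logder R S : R * S = 1 ->
  laur_in_ps (lval (fcoef R 0)) -> laur_in_ps (lval (fcoef S 0)) ->
  forall i, ser_res (ser_of_fps (S * fps_wderiv R)) i = 0.
Proof.
move=> RS R0 S0 [|i].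
  rewrite /ser_res /ser_of_fps fcoefM0 lvalM.
  exact: (laur_in_psM S0 (laur_in_ps_deriv R0) (ltrN10 _)).
have := congr1 (fun X => lval (fcoef X i) (-1)) (fps_deriv_logder (@laurent_derivM K) RS).
rewrite /= lvalMn /laur_deriv addNr mul0r => /eqP; rewrite mulrn_eq0 /=.
by move/eqP.
Qed.

Lemma vanishes_below_ode_step y h M : laur_in_ps h ->
  (forall n, n < 0 -> laur_deriv y n = laur_mul y h n) ->
  vanishes_below y M -> M < 0 -> vanishes_below y (M + 1).
Proof.
move=> h0 y'E yM ltM0.
have yM0 : y M = 0.
  have ltM1 : M - 1 < 0 by lia.
  have := y'E _ ltM1; rewrite /laur_deriv subrK (vanishes_below_mul yM h0); last lia.
  by move=> /eqP; rewrite mulf_eq0 intr_eq0 => /orP[/eqP M0|/eqP //]; lia.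
move=> n ltn; have [ltnM|lenM] := ltP n M; first exact: yM.
by rewrite (_ : n = M) //; lia.
Qed.

Lemma laur_in_ps_ode y h : laur_valid y -> laur_in_ps h ->
  (forall n, n < 0 -> laur_deriv y n = laur_mul y h n) -> laur_in_ps y.
Proof.
move=> vy h0 y'E.
suff lift k : vanishes_below y (- k%:Z) -> laur_in_ps y.
  by apply: (lift (absz (lbound y))); apply: vanishes_below_le (lbound_vanishes vy) _; lia.
elim: k => [//|k IH] yk; apply: IH.
rewrite (_ : - k%:Z = - k.+1%:Z + 1); last lia.
by apply: (vanishes_below_ode_step h0 y'E yk); lia.
Qed.

Lemma in_ps2_ode G h : in_ps2 (ser_of_fps h) -> fps_wderiv G = G * h ->
  in_ps2 (ser_of_fps G).
Proof.
move=> h0 G'E i; elim/ltn_ind: i => i IH.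
apply: (laur_in_ps_ode (lval_valid _) (h0 0%N)) => n ltn.
rewrite -[laur_deriv _ _]/(lval (fcoef (fps_wderiv G) i) n) G'E fcoefM big_ord_recr.
rewrite lvalD lval_sum big1 ?add0r /= ?subnn // => j _.
exact: (laur_in_psM (IH j (ltn_ord j)) (h0 _) ltn).
Qed.

End LogarithmicDerivative.

Section PolarAntiderivative.
Variable K : numFieldType.

Definition polar_antideriv (f : laur K) : laur K :=
  fun n => if n < 0 then - f (n - 1) / n%:~R else 0.

Lemma laur_valid_polar_antideriv f : laur_valid f -> laur_valid (polar_antideriv f).
Proof.
case=> N fN; exists (Num.min (N + 1) 0) => n; rewrite lt_min => /andP[ltN lt0].
by rewrite /polar_antideriv lt0 fN ?oppr0 ?mul0r //; lia.
Qed.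

Lemma laur_deriv_polar_antideriv f n : n < -1 -> laur_deriv (polar_antideriv f) n = - f n.
Proof.
move=> ltn; rewrite /laur_deriv /polar_antideriv ifT; last lia.
rewrite addrK mulrCA mulfV ?mulr1 // intr_eq0; apply/eqP; lia.
Qed.

Definition laurent_polar_antideriv (x : laurent K) : laurent K :=
  exist _ _ (laur_valid_polar_antideriv (lval_valid x)).

Lemma laurent_inv_natP i : laurent_cst (i.+1%:R^-1) * i.+1%:R = 1 :> laurent K.
Proof.
apply: lval_inj; apply: funext => n; rewrite lval_cstM lvalMn lval1 /laur_one.
by case: (n == 0); rewrite ?mul0rn ?mulr0 // mulVf // pnatr_eq0.
Qed.

End PolarAntiderivative.

Section SetY.
Variables (K : numFieldType) (a : ser K).
Hypothesis va : ser_valid a.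
Implicit Types (r g : ser K) (R S G H : fps (laurent K)).

Definition inY_fps R S :=
  in_winv_ps2 (ser_of_fps (a_prime_fps a R S)) /\
  ser_res (ser_of_fps (a_prime_fps a R S)) = minus_half_lam.

Lemma inYE r S : ser_valid r -> fps_of_ser r * S = 1 ->
  inY a r <-> ps_unit1 (r 0%N) /\ inY_fps (fps_of_ser r) S.
Proof.
move=> vr rS; rewrite /inY (a_primeE va vr rS).
by split=> [[_ r0 Ywinv Yres]|[r0 [Ywinv Yres]]].
Qed.

Lemma ps_unit1_of_fps R S : R * S = 1 ->
  laur_in_ps (lval (fcoef R 0)) -> laur_in_ps (lval (fcoef S 0)) ->
  ps_unit1 (ser_of_fps R 0%N).
Proof.
move=> RS R0 S0; split=> //; exists (lval (fcoef S 0)); split=> //.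
by rewrite /ser_of_fps -lvalM -fcoefM0 RS.
Qed.

Lemma fps_of_ser_unit r : ser_valid r -> ps_unit1 (r 0%N) ->
  exists S, fps_of_ser r * S = 1 /\ laur_in_ps (lval (fcoef S 0)).
Proof.
move=> vr [_ [h [h0 r0h]]].
have vh : laur_valid h by exists 0.
have r0u : fcoef (fps_of_ser r) 0 * laurent_of h = 1.
  by apply: lval_inj; rewrite lvalM /= !laurent_ofK.
have [S rS] := fps_rinv_exists r0u; exists S; split=> //.
have r0S : fcoef (fps_of_ser r) 0 * fcoef S 0 = 1 by rewrite -fcoefM0 rS.
suff -> : fcoef S 0 = laurent_of h by rewrite laurent_ofK.
by rewrite -[LHS]mulr1 -r0u mulrA (mulrC (fcoef S 0)) r0S mul1r.
Qed.

Lemma ser_res_a_prime R S i : R * S = 1 ->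
  laur_in_ps (lval (fcoef R 0)) -> laur_in_ps (lval (fcoef S 0)) ->
  ser_res (ser_of_fps (a_prime_fps a R S)) i = ser_res a i.
Proof.
move=> RS R0 S0; rewrite ser_resD ser_res_lam fps_of_serK //.
by case: i => [|i]; rewrite ?ser_res_logder ?addr0.
Qed.

Lemma inY_necessary r : inY a r -> laur_in_winv_ps (a 1%N) /\ ser_res a = minus_half_lam.
Proof.
move=> Yr; have [vr r0 _ _] := Yr.
have [S [rS S0]] := fps_of_ser_unit vr r0.
have R0 : laur_in_ps (lval (fcoef (fps_of_ser r) 0)) by rewrite laurent_ofK //; case: r0.
have [_ [Ywinv Yres]] := (inYE vr rS).1 Yr.
split; last by apply: funext => i; rewrite -Yres ser_res_a_prime.
move=> n ltn; have := Ywinv 1%N n ltn.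
rewrite /ser_of_fps fcoefD lvalD lval_fps_of_ser // fcoef_lamS fcoefM0 lvalM.
have -> : laur_mul (lval (fcoef S 0)) (lval (fcoef (fps_wderiv (fps_of_ser r)) 0)) n = 0.
  by apply: (laur_in_psM S0 (laur_in_ps_deriv R0)); lia.
by rewrite addr0.
Qed.

Lemma a_prime_fps_mul R S G H : G * H = 1 -> R * S = 1 ->
  a_prime_fps a (G * R) (H * S) = a_prime_fps a R S + fps_lam (H * fps_wderiv G).
Proof.
move=> GH RS; rewrite /a_prime_fps -addrA -fps_lamD; congr (_ + fps_lam _).
rewrite fps_wderivM mulrDr.
have -> : H * S * (fps_wderiv G * R) = H * fps_wderiv G * (R * S) by ring.
have -> : H * S * (G * fps_wderiv R) = G * H * (S * fps_wderiv R) by ring.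
by rewrite RS GH mulr1 mul1r addrC.
Qed.

Lemma inY_fps_mul R S G H : G * H = 1 -> R * S = 1 ->
  in_ps2 (ser_of_fps G) -> in_ps2 (ser_of_fps H) -> inY_fps R S -> inY_fps (G * R) (H * S).
Proof.
move=> GH RS G0 H0 [Ywinv Yres].
have HG'0 : in_ps2 (ser_of_fps (fps_lam (H * fps_wderiv G))).
  exact/in_ps2_lam/in_ps2M/in_ps2_wderiv.
rewrite /inY_fps a_prime_fps_mul //; split; first exact: in_winv_ps2D.
by rewrite -Yres; apply: funext => i; rewrite ser_resD (ser_res_in_ps2 _ HG'0) addr0.
Qed.


Lemma inY_mul g r : ps2_unit g -> inY a r -> inY a (ser_mul g r).
Proof.
move=> [g0 [h [h0 gh]]] Yr; have [vr r0 _ _] := Yr.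
have [vg vh] := (in_ps2_valid g0, in_ps2_valid h0).
have [S [rS S0]] := fps_of_ser_unit vr r0.
have GH : fps_of_ser g * fps_of_ser h = 1.
  by apply: (can_inj (@ser_of_fpsK K)); rewrite -ser_mulE !fps_of_serK // gh ser_oneE.
have GRHS : fps_of_ser g * fps_of_ser r * (fps_of_ser h * S) = 1.
  by rewrite mulrACA GH rS mulr1.
have [G0 H0] : in_ps2 (ser_of_fps (fps_of_ser g)) /\ in_ps2 (ser_of_fps (fps_of_ser h)).
  by rewrite !fps_of_serK.
rewrite -{1}(fps_of_serK vg) -{1}(fps_of_serK vr) ser_mulE.
rewrite (inYE (ser_of_fps_valid _) (etrans (congr1 (fun X => X * _) (ser_of_fpsK _)) GRHS)).
rewrite ser_of_fpsK; split.
  apply: ps_unit1_of_fps GRHS _ _; rewrite fcoefM0 lvalM; apply: laur_in_psM.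
  - exact: G0.
  - by rewrite lval_fps_of_ser //; case: r0.
  - exact: H0.
  - exact: S0.
by apply: inY_fps_mul => //; have [] := (inYE vr rS).1 Yr.
Qed.

Lemma logder_diff_in_ps2 R S R' S' : inY_fps R S -> inY_fps R' S' ->
  in_ps2 (ser_of_fps (S * fps_wderiv R - S' * fps_wderiv R')).
Proof.
move=> [Rwinv Rres] [R'winv R'res] i n ltn.
have lamE : fps_lam (S * fps_wderiv R - S' * fps_wderiv R') =
    a_prime_fps a R S - a_prime_fps a R' S'.
  by rewrite /a_prime_fps fps_lamD fps_lamN; ring.
rewrite /ser_of_fps -fcoef_lamS lamE fcoefB lvalB.
have [->|ne] := eqVneq n (-1).
  have Rres1 : lval (fcoef (a_prime_fps a R S) i.+1) (-1) = minus_half_lam i.+1.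
    by rewrite -Rres.
  have R'res1 : lval (fcoef (a_prime_fps a R' S') i.+1) (-1) = minus_half_lam i.+1.
    by rewrite -R'res.
  by rewrite Rres1 R'res1 subrr.
have Rn : lval (fcoef (a_prime_fps a R S) i.+1) n = 0 by apply: Rwinv; lia.
have R'n : lval (fcoef (a_prime_fps a R' S') i.+1) n = 0 by apply: R'winv; lia.
by rewrite Rn R'n subrr.
Qed.

Lemma inY_fps_ratio R S R' S' : R * S = 1 -> R' * S' = 1 ->
  inY_fps R S -> inY_fps R' S' -> in_ps2 (ser_of_fps (R * S')).
Proof.
move=> RS R'S' YR YR'; apply: (in_ps2_ode (logder_diff_in_ps2 YR YR')).
by apply: fps_map_deriv_ratio RS R'S'; apply: laurent_derivM.
Qed.

Lemma inY_orbit r r' : inY a r -> inY a r' -> exists g, ps2_unit g /\ r = ser_mul g r'.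
Proof.
move=> Yr Yr'; have [vr r0 _ _] := Yr; have [vr' r'0 _ _] := Yr'.
have [S [rS _]] := fps_of_ser_unit vr r0.
have [S' [r'S' _]] := fps_of_ser_unit vr' r'0.
have [[_ YR] [_ YR']] := ((inYE vr rS).1 Yr, (inYE vr' r'S').1 Yr').
exists (ser_of_fps (fps_of_ser r * S')); split.
  split; first exact: inY_fps_ratio YR YR'.
  exists (ser_of_fps (fps_of_ser r' * S)); split; first exact: inY_fps_ratio YR' YR.
  by rewrite ser_mulE ser_oneE mulrACA (mulrC S') -mulrACA rS r'S' mulr1.
rewrite -{1}(fps_of_serK vr') ser_mulE -mulrA (mulrC S') r'S' mulr1.
by rewrite fps_of_serK.
Qed.

Lemma inY_exists : laur_in_ps (a 0%N) -> laur_in_winv_ps (a 1%N) ->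
  ser_res a = minus_half_lam -> exists r, inY a r.
Proof.
move=> a0 a1 ares.
pose c := Fps (fun i => if i is j.+1
  then laurent_polar_antideriv (fcoef (fps_of_ser a) j.+2) else 0).
have c0 : fcoef c 0 = 0 by [].
pose R := fps_exp (fun i => laurent_cst (i.+1%:R^-1)) c.
have R0 : fcoef R 0 = 1 := fcoef_exp0 _ _.
have [S RS] : exists S, R * S = 1 by apply: (@fps_rinv_exists _ R 1); rewrite R0 mulr1.
have S0 : fcoef S 0 = 1 by rewrite -[LHS]mul1r -R0 -fcoefM0 RS.
have logR : S * fps_wderiv R = fps_wderiv c.
  rewrite /fps_wderiv (fps_map_exp (@laurent_inv_natP K) (@laurent_derivM K)) //.
  by rewrite mulrA (mulrC S) RS mul1r.
exists (ser_of_fps R).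
have RS' : fps_of_ser (ser_of_fps R) * S = 1 by rewrite ser_of_fpsK.
rewrite (inYE (ser_of_fps_valid R) RS') ser_of_fpsK; split.
  by apply: (ps_unit1_of_fps RS); rewrite ?R0 ?S0; apply: vanishes_below_cst.
rewrite /inY_fps /a_prime_fps logR; split.
  case=> [|[|j]] n ltn; rewrite /ser_of_fps fcoefD lvalD lval_fps_of_ser //.
  - by rewrite fcoef_lam0 lval0 addr0 a0 //; lia.
  - by rewrite fcoef_lamS fcoef_map c0 raddf0 lval0 addr0 a1.
  rewrite fcoef_lamS -[lval _ n]/(laur_deriv (polar_antideriv (lval (fcoef (fps_of_ser a) j.+2))) n).
  by rewrite laur_deriv_polar_antideriv // lval_fps_of_ser // subrr.
rewrite -ares; apply: funext => i; rewrite ser_resD ser_res_lam fps_of_serK //.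
by case: i => [|i]; rewrite ?ser_res_wderiv addr0.
Qed.

End SetY.

Theorem lemma4p8 (R : realType) (t d : ps R[i]) (a : ser R[i]) :
  disc t d 0%N = 0 ->
  disc t d 1%N != 0 ->
  ser_valid a ->
  spectral_a0 t d (a 0%N) ->
  (forall g r, ps2_unit g -> inY a r -> inY a (ser_mul g r)) /\
  ((forall r, ~ inY a r) \/
   exists r0, inY a r0 /\
     forall r, inY a r <-> exists g, ps2_unit g /\ r = ser_mul g r0) /\
  ((exists r, inY a r) <->
   (laur_in_winv_ps (a 1%N) /\ ser_res a = minus_half_lam)).
Proof.
move=> _ _ va [Z [_ _ a0 _]].
split; first by move=> g r; apply: inY_mul.
split.
  have [[r0 Yr0]|noY] := pselect (exists r, inY a r); [right|left].
    exists r0; split=> // r; split; first by move=> Yr; apply: inY_orbit.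
    by case=> g [g0 ->]; apply: inY_mul.
  by move=> r Yr; apply: noY; exists r.
split; first by case=> r; apply: inY_necessary.
by case=> a1 ares; apply: inY_exists.
Qed.
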